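(* Let $\Sigma=(\sigma_0,\sigma_\infty,\sigma_1,\tau)$ be a special admissible 4-tuple in $S_{2n}^4$ such that $\sigma_1\tau$ contains the 4-cycle $(2n-h,h,k_1,k_2)$ with $h<k_1<k_2<2n-h$. If $n$ is even, $k_1=n-h$ and $k_2=n+h$, then the conjugacy class of $\Sigma$ contains exactly two special admissible 4-tuples; otherwise it contains exactly four.
   Context: Permutation products are read left to right. An admissible 4-tuple is $(\sigma_0,\sigma_\infty,\sigma_1,\tau)\in S_{2n}^4$ with $\sigma_0$ a product of $n$ disjoint transpositions, $\sigma_\infty$ a $2n$-cycle, $\sigma_1$ a product of $n-2$ disjoint transpositions, $\tau$ a transposition, and $\sigma_0\sigma_\infty\sigma_1\tau=\mathrm{id}$. It is special if $\sigma_\infty=(2n,2n-1,\dots,1)$ and $\sigma_1(2n)=\tau(2n)=2n$. Conjugacy means simultaneous conjugation by some $\gamma\in S_{2n}$. *)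

(* Points 1..2n are represented by 'I_(2*n) with label = val+1.
   mathcomp's permutation product is left-to-right: (s * t) x = t (s x),
   matching the paper's convention. *)
From mathcomp Require Import all_boot all_order all_fingroup.
Set Implicit Arguments. Unset Strict Implicit. Unset Printing Implicit Defensive.

Local Open Scope group_scope.

Definition pt (n : nat) := 'I_(2 * n).
Definition perm2n (n : nat) := {perm pt n}.
Definition tuple4 (n : nat) := (perm2n n * perm2n n * perm2n n * perm2n n)%type.

Definition lab (n : nat) (x : pt n) : nat := (val x).+1.

Definition prod_disj_transp (n : nat) (k : nat) (s : perm2n n) : bool :=
  (s * s == 1) && (#|[set x | s x != x]| == (2 * k)%N).

Definition full_cycle (n : nat) (s : perm2n n) : bool :=
  [forall x, #|porbit s x| == (2 * n)%N].

Definition admissible (n : nat) (S : tuple4 n) : bool :=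
  let: (s0, sinf, s1, t) := S in
  [&& prod_disj_transp n s0,
      full_cycle sinf,
      prod_disj_transp (n - 2)%N s1,
      prod_disj_transp 1 t &
      s0 * sinf * s1 * t == 1].

(* sigma_inf = (2n, 2n-1, ..., 1): label j |-> j-1 for j >= 2, and 1 |-> 2n *)
Definition is_sinf_std (n : nat) (s : perm2n n) : bool :=
  [forall x, lab (s x) == (if lab x == 1%N then (2 * n)%N else (lab x).-1)].

Definition special (n : nat) (S : tuple4 n) : bool :=
  let: (s0, sinf, s1, t) := S in
  [&& admissible S, is_sinf_std sinf &
      [forall x, (lab x == (2 * n)%N) ==> (s1 x == x) && (t x == x)]].

Definition conjugate (n : nat) (S S' : tuple4 n) : bool :=
  let: (a0, a1, a2, a3) := S in
  let: (b0, b1, b2, b3) := S' in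
  [exists g : perm2n n,
    [&& b0 == a0 ^ g, b1 == a1 ^ g, b2 == a2 ^ g & b3 == a3 ^ g]].

Definition special_in_class (n : nat) (S : tuple4 n) : {set tuple4 n} :=
  [set S' : tuple4 n | special S' && conjugate S S'].

From Pilot Require Import Defs.
From mathcomp Require Import all_boot all_order all_fingroup.
From mathcomp Require Import zify.
Set Implicit Arguments. Unset Strict Implicit. Unset Printing Implicit Defensive.

(* Write s1t for s1 t, so that s1t (sinf x) = s0 x.  Since s0 is a fixed-point-free
   involution, s1t conjugates the rotation x |-> x + 1 into its inverse; hence on each of
   the four arcs cut out by the 4-cycle (a b c d) of s1t, s1t acts as the reflection of
   the arc.  Each arc therefore has even length, and its midpoint is the
   only point of it fixed by both s1 and t: s1 and t have exactly four common fixed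
   points.  A conjugate of the tuple by g is special iff g commutes with sinf, i.e. is a
   rotation, and carries one of these four points to 2n.  This yields four special
   conjugates; two of them coincide iff a nontrivial rotation commutes with the whole
   tuple, which must be the half-turn and forces k1 = n - h, k2 = n + h and n even. *)

Section CyclicShift.
Variable m : nat.
Implicit Types (x y : 'I_m) (s g : {perm 'I_m}).

Lemma ord_gt0 x : 0 < m.
Proof. exact: leq_ltn_trans (leq0n _) (ltn_ord x). Qed.

Definition cshift x (i : nat) : 'I_m := Ordinal (ltn_pmod (val x + i) (ord_gt0 x)).

Lemma val_cshift x i : val (cshift x i) = (val x + i) %% m. Proof. by []. Qed.

Lemma val_cshiftP x i : i <= m ->
  (val x + i < m /\ val (cshift x i) = val x + i) \/
  (m <= val x + i /\ val (cshift x i) = val x + i - m).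
Proof.
move=> le_im; rewrite val_cshift; have lt_xm : val x < m := ltn_ord x.
case: (ltnP (val x + i) m) => [lt_m|le_m]; [left|right]; split=> //.
  by rewrite modn_small.
by rewrite -[in LHS](subnK le_m) modnDr modn_small //; lia.
Qed.

Lemma cshift0 x : cshift x 0 = x.
Proof. by apply: val_inj; rewrite val_cshift addn0 modn_small ?ltn_ord. Qed.

Lemma cshiftD x i j : cshift (cshift x i) j = cshift x (i + j).
Proof. by apply: val_inj; rewrite !val_cshift modnDml addnA. Qed.

Lemma cshiftDm x i : cshift x (i + m) = cshift x i.
Proof. by apply: val_inj; rewrite !val_cshift addnA modnDr. Qed.

Lemma cshiftm x : cshift x m = x.
Proof. by rewrite -[X in cshift x X](add0n m) cshiftDm cshift0. Qed.

Lemma cshift_inj x i j : i < m -> j < m -> cshift x i = cshift x j -> i = j.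
Proof.
move=> lt_im lt_jm /(congr1 val); rewrite !val_cshift => /eqP.
by rewrite eqn_modDl !modn_small // => /eqP.
Qed.

Lemma cshiftl_inj i : injective (cshift^~ i).
Proof.
move=> x y /(congr1 val); rewrite !val_cshift => /eqP.
by rewrite eqn_modDr !modn_small ?ltn_ord // => /eqP /val_inj.
Qed.

Lemma cshift_neq x i : 0 < i < m -> cshift x i != x.
Proof.
move=> /andP[i_gt0 lt_im]; apply/eqP; rewrite -[in X in _ = X](cshift0 x).
by move/cshift_inj => /(_ lt_im (ord_gt0 x)) i0; rewrite i0 in i_gt0.
Qed.

Lemma cshift_twice x i : 0 < i < m -> cshift (cshift x i) i = x -> m = i.*2.
Proof.
move=> lt_im; rewrite cshiftD -addnn => Ex.
have x0 : cshift x (i + i) = cshift x 0 by rewrite cshift0.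
case: (ltnP (i + i) m) => [lt_2im|le_m2i].
  by move: x0 => /cshift_inj; lia.
by move: x0; rewrite -(subnK le_m2i) cshiftDm => /cshift_inj; lia.
Qed.

Definition cdist x y := (val y + m - val x) %% m.

Lemma cdist_lt x y : cdist x y < m.
Proof. exact: ltn_pmod (ord_gt0 x). Qed.

Lemma cshift_cdist x y : cshift x (cdist x y) = y.
Proof.
apply: val_inj; have := valP x; have := valP y => lt_ym lt_xm.
rewrite val_cshift /cdist modnDmr addnBA; last lia.
by rewrite addnC -addnBA // subnn addn0 modnDr modn_small.
Qed.

Lemma cdistE x y :
  cdist x y = if val x <= val y then val y - val x else val y + m - val x.
Proof.
rewrite /cdist; have := valP x; have := valP y => lt_ym lt_xm.
case: leqP => [le_xy|lt_yx]; last by rewrite modn_small //; lia.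
by rewrite -addnBAC // modnDr modn_small //; lia.
Qed.

Definition cshift_perm i : {perm 'I_m} := perm (@cshiftl_inj i).

Lemma cshift_permE i x : cshift_perm i x = cshift x i. Proof. by rewrite permE. Qed.

Definition shifts_back s := forall x, s x = cshift x m.-1.

Section CommuteShiftBack.
Variables s g : {perm 'I_m}.
Hypotheses (s_back : shifts_back s) (gs : forall x, g (s x) = s (g x)).

Lemma commute_cshift x i : g (cshift x i) = cshift (g x) i.
Proof.
have back1 y : s (cshift y 1) = y.
  by rewrite s_back cshiftD add1n prednK ?cshiftm // (ord_gt0 y).
have g1 y : g (cshift y 1) = cshift (g y) 1.
  by apply: (@perm_inj _ s); rewrite -gs !back1.
elim: i => [|i IH]; first by rewrite !cshift0.
by rewrite -addn1 -!cshiftD g1 IH.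
Qed.

Lemma commute_cshift_cdist x0 x : g x = cshift x (cdist x0 (g x0)).
Proof.
rewrite -[in LHS](cshift_cdist x0 x) commute_cshift -[in LHS](cshift_cdist x0 (g x0)).
by rewrite !cshiftD addnC -cshiftD cshift_cdist.
Qed.

End CommuteShiftBack.

Lemma commute_shifts_back_eq s g g' x :
  shifts_back s -> (forall y, g (s y) = s (g y)) -> (forall y, g' (s y) = s (g' y)) ->
  g x = g' x -> g = g'.
Proof.
move=> s_back gs g's gx; apply/permP => y.
by rewrite -(cshift_cdist x y) !(commute_cshift s_back) ?gx.
Qed.

Lemma cshift_perm_commute s i x : shifts_back s -> cshift_perm i (s x) = s (cshift_perm i x).
Proof. by move=> s_back; rewrite !cshift_permE !s_back !cshiftD addnC. Qed.

End CyclicShift.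

Arguments cshift_perm {m} i.

Lemma conjg_perm_id (T : finType) (s g : {perm T}) :
  (s ^ g)%g = s <-> (forall x, g (s x) = s (g x)).
Proof.
split=> [sg x|gs]; first by rewrite -permJ sg.
by apply/permP => x; rewrite -(permKV g x) permJ gs.
Qed.

Section Transpositions.
Variable n : nat.
Implicit Types (s g : perm2n n) (x y : pt n).

Lemma prod_disj_transp_invol k s x : prod_disj_transp k s -> s (s x) = x.
Proof. by case/andP => /eqP ss _; rewrite -permM ss perm1. Qed.

Lemma prod_disj_transp_fpf s x : prod_disj_transp n s -> s x != x.
Proof.
case/andP => _ /eqP card_supp; suff : x \in [set y | s y != y] by rewrite inE.
have /eqP -> : [set y | s y != y] == setT.
  by rewrite eqEcard subsetT cardsT card_supp (eq_leq (card_ord _)).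
by rewrite inE.
Qed.

Lemma prod_disj_transp1_fix s x y : prod_disj_transp 1 s ->
  s x != x -> y != x -> y != s x -> s y = y.
Proof.
move=> s_transp sx yx ysx; have sK z := prod_disj_transp_invol z s_transp.
have supp : [set z | s z != z] = [set x; s x].
  case/andP: s_transp => _ /eqP card_supp.
  apply/esym/eqP; rewrite eqEcard card_supp cards2 eq_sym sx andbT.
  by apply/subsetP => z; rewrite !inE => /orP[] /eqP ->; rewrite ?sK // eq_sym.
apply/eqP/negPn/negP => moved; have : y \in [set z | s z != z] by rewrite inE.
by rewrite supp !inE (negbTE yx) (negbTE ysx).
Qed.

Lemma prod_disj_transp_conj k s g : prod_disj_transp k s -> prod_disj_transp k (s ^ g)%g.
Proof.
case/andP => /eqP ss card_supp; apply/andP; split; first by rewrite -conjMg ss conj1g.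
have -> : [set x | (s ^ g)%g x != x] = g @: [set x | s x != x].
  apply/setP => x; rewrite -(permKV g x) mem_imset ?inE; last exact: perm_inj.
  by rewrite permJ (inj_eq perm_inj).
by rewrite card_imset //; exact: perm_inj.
Qed.

Lemma is_sinf_std_shifts_back s : is_sinf_std s -> shifts_back s.
Proof.
move=> /forallP std x; apply: val_inj; move: (std x); rewrite /lab => /eqP.
have := ltn_ord x; have := ltn_ord (s x).
case: (val_cshiftP x (leq_pred (2 * n))) => -[+ ->]; rewrite -subn1;
  by move: (s x) => y; case: eqP => /=; lia.
Qed.

End Transpositions.

Definition conj4 n (S : tuple4 n) (g : perm2n n) : tuple4 n :=
  let: (s0, sinf, s1, t) := S in (s0 ^ g, sinf ^ g, s1 ^ g, t ^ g)%g.

Lemma conjugateP n (S S' : tuple4 n) : reflect (exists g, S' = conj4 S g) (Defs.conjugate S S').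
Proof.
move: S S' => [[[a0 a1] a2] a3] [[[b0 b1] b2] b3]; apply: (iffP existsP) => -[g].
  by move=> /and4P[/eqP-> /eqP-> /eqP-> /eqP->]; exists g.
by move=> [-> -> -> ->]; exists g; rewrite !eqxx.
Qed.

Lemma commute_transp_swap (T : finType) (g t : {perm T}) u v :
  (forall x, g x != x) -> (forall x, g (t x) = t (g x)) ->
  t u = v -> u != v -> (forall y, y != u -> y != v -> t y = y) -> g u = v.
Proof.
move=> g_fpf gt tu uv t_fix; case: (eqVneq (g u) v) => // guv.
have : t (g u) = g u by apply: t_fix; rewrite ?g_fpf.
by rewrite -gt tu => /perm_inj/eqP; rewrite eq_sym (negbTE uv).
Qed.

Lemma transp_commute (T : finType) (t r : {perm T}) u v :
  t u = v -> t v = u -> (forall y, y != u -> y != v -> t y = y) ->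
  r u = v -> r v = u -> forall y, t (r y) = r (t y).
Proof.
move=> tu tv t_fix ru rv y.
case: (eqVneq y u) => [->|yu]; first by rewrite ru tv tu rv.
case: (eqVneq y v) => [->|yv]; first by rewrite rv tu tv ru.
have ryu : r y != u by rewrite -rv (inj_eq perm_inj).
have ryv : r y != v by rewrite -ru (inj_eq perm_inj).
by rewrite !t_fix.
Qed.

Section SpecialTuple.
Variables (n : nat) (s0 sinf s1 t : perm2n n) (h k1 k2 : nat) (a b c d : pt n).
Local Notation N := (2 * n).
Hypothesis special_S : special (s0, sinf, s1, t).
Hypotheses (hk : h < k1 < k2) (hk2 : k2 < N - h).
Hypotheses (lab_a : lab a = N - h) (lab_b : lab b = h) (lab_c : lab c = k1) (lab_d : lab d = k2).

Definition s1t x := t (s1 x).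

Hypotheses (s1t_a : s1t a = b) (s1t_b : s1t b = c) (s1t_c : s1t c = d) (s1t_d : s1t d = a).

Lemma special_parts :
  [/\ prod_disj_transp n s0, prod_disj_transp (n - 2) s1, prod_disj_transp 1 t,
      (s0 * sinf * s1 * t)%g = 1%g & shifts_back sinf].
Proof.
case/and3P: special_S => /and5P[P0 _ P1 Pt /eqP Pr] /is_sinf_std_shifts_back std _.
by split.
Qed.

Lemma s0K x : s0 (s0 x) = x.
Proof. by case: special_parts => P0 _ _ _ _; apply: prod_disj_transp_invol P0. Qed.
Lemma s1K x : s1 (s1 x) = x.
Proof. by case: special_parts => _ P1 _ _ _; apply: prod_disj_transp_invol P1. Qed.
Lemma tK x : t (t x) = x.
Proof. by case: special_parts => _ _ Pt _ _; apply: prod_disj_transp_invol Pt. Qed.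
Lemma s0_fpf x : s0 x != x.
Proof. by case: special_parts => P0 _ _ _ _; apply: prod_disj_transp_fpf. Qed.
Lemma sinf_back : shifts_back sinf.
Proof. by case: special_parts. Qed.

Lemma t_fix x : t x != x -> forall y, y != x -> y != t x -> t y = y.
Proof. by case: special_parts => _ _ Pt _ _ tx y; apply: prod_disj_transp1_fix. Qed.

Lemma s1t_sinf y : s1t (sinf y) = s0 y.
Proof.
case: special_parts => _ _ _ /(congr1 (fun g : perm2n n => g (s0 y))) + _.
by rewrite !permM perm1 s0K.
Qed.

Lemma N_gt0 : 0 < N. Proof. exact: ord_gt0 a. Qed.

Lemma sinf_cshift1 u : sinf (cshift u 1) = u.
Proof. by rewrite sinf_back cshiftD add1n prednK ?N_gt0 ?cshiftm. Qed.

(* The relation s0 = s1t sinf with s0 an involution says that s1t conjugates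
   the unit shift into its inverse. *)
Lemma s1t_cshift_pred u : s1t (cshift (s1t u) N.-1) = cshift u 1.
Proof. by rewrite -{1}(sinf_cshift1 u) s1t_sinf -sinf_back s1t_sinf s0K. Qed.

Lemma s1t_neq_cshift1 u : s1t u != cshift u 1.
Proof. by rewrite -{1}(sinf_cshift1 u) s1t_sinf s0_fpf. Qed.

Lemma val_cycle_pts :
  [/\ val a = N - h - 1, (val b).+1 = h, (val c).+1 = k1 & (val d).+1 = k2].
Proof. by split=> //; move: lab_a; rewrite /lab; lia. Qed.

Ltac lia_pts := case: val_cycle_pts => /=; lia.

Lemma neq_of_val (x y : pt n) : val x <> val y -> x != y.
Proof. by move=> xy; apply/eqP => /(congr1 val). Qed.

Ltac pts_neq := apply: neq_of_val; lia_pts.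

Definition transp_ac := [/\ t a = c, t c = a, (forall y, y != a -> y != c -> t y = y) &
   [/\ s1 a = b, s1 b = a, s1 c = d & s1 d = c]].
Definition transp_bd := [/\ t b = d, t d = b, (forall y, y != b -> y != d -> t y = y) &
   [/\ s1 b = c, s1 c = b, s1 d = a & s1 a = d]].

(* Since s1 x = t (s1t x) is an involution, t swaps two opposite points of the
   4-cycle of s1t. *)
Lemma transp_cases : transp_ac \/ transp_bd.
Proof.
have s1_of_t x y : t x = s1t y -> s1 y = x by move=> txy; apply: (@perm_inj _ t); rewrite txy.
case: (eqVneq (t b) b) => [tb|tb_moved].
  have s1a : s1 a = b by apply: s1_of_t; rewrite tb.
  have s1b : s1 b = a by rewrite -s1a s1K.
  have ta : t a = c by rewrite -s1b.
  have tc : t c = a by rewrite -ta tK.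
  have t_fix_a : forall y, y != a -> y != t a -> t y = y.
    by apply: t_fix; rewrite ta; pts_neq.
  have td : t d = d by apply: t_fix_a; rewrite ?ta; pts_neq.
  have s1c : s1 c = d by apply: s1_of_t; rewrite td.
  left; split=> //; first by move=> y; rewrite -ta; apply: t_fix_a.
  by split=> //; rewrite -s1c s1K.
have t_fix_b := t_fix tb_moved.
have s1a : s1 a = t b by apply: s1_of_t; rewrite tK.
case: (eqVneq (t b) a) => [tb|tb_a].
  have ta : t a = b by rewrite -tb tK.
  have s1d : s1 d = b by apply: s1_of_t; rewrite tb.
  have s1b : s1 b = d by rewrite -s1d s1K.
  have td : t d = d by apply: t_fix_b; rewrite ?tb; pts_neq.
  have cd : c != d by pts_neq.
  by move: s1t_b; rewrite /s1t s1b td => dc; rewrite dc eqxx in cd.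
have ta : t a = a by apply: t_fix_b; rewrite 1?eq_sym //; pts_neq.
have s1d : s1 d = a by apply: s1_of_t; rewrite ta.
have tb : t b = d by rewrite -s1a -s1d s1K.
have tc : t c = c by apply: t_fix_b; rewrite ?tb; pts_neq.
have s1b : s1 b = c by apply: s1_of_t; rewrite tc.
right; split=> //; first by rewrite -tb tK.
  by move=> y; rewrite -tb; apply: t_fix_b.
by split=> //; rewrite -?s1b -?s1d s1K.
Qed.

Definition off_cycle y := y \notin [:: a; b; c; d].

Lemma off_cycle_val y :
  val y <> val a -> val y <> val b -> val y <> val c -> val y <> val d -> off_cycle y.
Proof.
move=> /neq_of_val/negbTE ya /neq_of_val/negbTE yb /neq_of_val/negbTE yc /neq_of_val/negbTE yd.
by rewrite /off_cycle !inE ya yb yc yd.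
Qed.

Lemma t_off_cycle y : off_cycle y -> t y = y.
Proof.
rewrite /off_cycle !inE => /norP[ya /norP[yb /norP[yc yd]]].
by case: transp_cases => -[_ _ t_fix_off _]; apply: t_fix_off.
Qed.

Lemma s1_off_cycle y : off_cycle y -> off_cycle (s1 y).
Proof.
apply: contra; rewrite -{2}(s1K y); move: (s1 y) => z.
case: transp_cases => -[_ _ _ [s1a s1b s1c s1d]]; rewrite !inE => /or4P[] /eqP->;
  by rewrite ?s1a ?s1b ?s1c ?s1d eqxx ?orbT.
Qed.

Lemma s1t_off_cycle y : off_cycle y -> s1t y = s1 y.
Proof. by move/s1_off_cycle/t_off_cycle. Qed.

Lemma s1tK_off_cycle y : off_cycle y -> s1t (s1t y) = y.
Proof. by move=> y_off; rewrite !s1t_off_cycle ?s1K ?s1_off_cycle. Qed.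

Lemma s1_moves_on_cycle y : ~~ off_cycle y -> s1 y != y.
Proof.
rewrite negbK !inE => /or4P[] /eqP->;
  by case: transp_cases => -[_ _ _ [s1a s1b s1c s1d]]; rewrite ?s1a ?s1b ?s1c ?s1d; pts_neq.
Qed.

Definition free_arc x L :=
  [/\ 0 < L < N, s1t x = cshift x L & forall j, 0 < j < L -> off_cycle (cshift x j)].

Lemma free_arc_reflect x L i : free_arc x L -> i < L -> s1t (cshift x i) = cshift x (L - i).
Proof.
case=> L_bounds s1tx arc_off; elim: i => [_|i IH lt_iL]; first by rewrite cshift0 subn0.
have := s1t_cshift_pred (cshift x i); rewrite IH ?(ltnW lt_iL) // cshiftD.
have -> : L - i + N.-1 = L - i.+1 + N by have := N_gt0; lia.
rewrite cshiftDm cshiftD addn1 => <-.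
by apply: s1tK_off_cycle; apply: arc_off; lia.
Qed.

Lemma free_arc_even x L : free_arc x L -> ~~ odd L.
Proof.
move=> arc_xL; apply/negP => odd_L.
have L_half := odd_double_half L; rewrite odd_L -muln2 in L_half.
have lt_half : L./2 < L by lia.
have := s1t_neq_cshift1 (cshift x L./2).
by rewrite (free_arc_reflect arc_xL lt_half) cshiftD (_ : L - L./2 = L./2 + 1) ?eqxx //; lia.
Qed.

Ltac case_cshift x j :=
  let le_jN := fresh "le_jN" in
  have le_jN : j <= N; [lia_pts | case: (val_cshiftP x le_jN) => -[+ ->]].

Lemma free_arc_a : free_arc a (2 * h).
Proof.
split; first by lia_pts.
  by rewrite s1t_a; apply: val_inj; case_cshift a (2 * h); lia_pts.
by move=> j lt_j; apply: off_cycle_val; case_cshift a j; lia_pts.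
Qed.

Lemma free_arc_b : free_arc b (k1 - h).
Proof.
split; first by lia_pts.
  by rewrite s1t_b; apply: val_inj; case_cshift b (k1 - h); lia_pts.
by move=> j lt_j; apply: off_cycle_val; case_cshift b j; lia_pts.
Qed.

Lemma free_arc_c : free_arc c (k2 - k1).
Proof.
split; first by lia_pts.
  by rewrite s1t_c; apply: val_inj; case_cshift c (k2 - k1); lia_pts.
by move=> j lt_j; apply: off_cycle_val; case_cshift c j; lia_pts.
Qed.

Lemma free_arc_d : free_arc d (N - h - k2).
Proof.
split; first by lia_pts.
  by rewrite s1t_d; apply: val_inj; case_cshift d (N - h - k2); lia_pts.
by move=> j lt_j; apply: off_cycle_val; case_cshift d j; lia_pts.
Qed.

Lemma free_arcs_cover y :
  [\/ cdist a y < 2 * h, cdist b y < k1 - h, cdist c y < k2 - k1 | cdist d y < N - h - k2].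
Proof.
apply/or4P; have := ltn_ord y; rewrite !cdistE.
by do 4 case: ifP; case: val_cycle_pts => /=; lia.
Qed.

Definition midpoint (x : pt n) L := cshift x L./2.

Lemma midpoint_fixed x L : free_arc x L ->
  s1 (midpoint x L) = midpoint x L /\ t (midpoint x L) = midpoint x L.
Proof.
move=> arc_xL; have L_half := even_halfK (free_arc_even arc_xL).
case: (arc_xL) => L_bounds _ arc_off.
have mid_off : off_cycle (midpoint x L) by apply: arc_off; lia.
have lt_half : L./2 < L by lia.
have : s1t (midpoint x L) = midpoint x L.
  by rewrite (free_arc_reflect arc_xL lt_half) (_ : L - L./2 = L./2) //; lia.
by rewrite s1t_off_cycle // => ->; rewrite t_off_cycle.
Qed.

Lemma midpoint_unique x L y : free_arc x L -> ~~ off_cycle x ->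
  cdist x y < L -> off_cycle y -> s1t y = y -> y = midpoint x L.
Proof.
move=> arc_xL x_on lt_iL y_off s1ty; case: (arc_xL) => L_bounds _ _.
have y_eq := cshift_cdist x y; set i := cdist x y in y_eq lt_iL *.
have := free_arc_reflect arc_xL lt_iL; rewrite y_eq s1ty => y_eq'.
have i_gt0 : 0 < i.
  by rewrite lt0n; apply: contraNneq x_on => i0; rewrite -y_eq i0 cshift0 in y_off.
have i_sym : i = L - i by apply: (@cshift_inj _ x); rewrite ?y_eq //; lia.
by rewrite /midpoint (_ : L = i.*2) ?doubleK // -addnn; lia.
Qed.

Definition mid_a := midpoint a (2 * h).
Definition mid_b := midpoint b (k1 - h).
Definition mid_c := midpoint c (k2 - k1).
Definition mid_d := midpoint d (N - h - k2).
Definition mids : {set pt n} := mid_a |: (mid_b |: (mid_c |: [set mid_d])).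

Lemma fixed_in_mids y : s1 y = y -> t y = y -> y \in mids.
Proof.
move=> s1y ty; have y_off : off_cycle y.
  by apply: contraT => /s1_moves_on_cycle; rewrite s1y eqxx.
have s1ty : s1t y = y by rewrite /s1t s1y.
have on_cycle x : x \in [:: a; b; c; d] -> ~~ off_cycle x by rewrite negbK.
rewrite !inE; case: (free_arcs_cover y) => lt_y.
- by rewrite (midpoint_unique free_arc_a _ lt_y y_off s1ty) ?on_cycle ?inE ?eqxx.
- by rewrite (midpoint_unique free_arc_b _ lt_y y_off s1ty) ?on_cycle ?inE ?eqxx ?orbT.
- by rewrite (midpoint_unique free_arc_c _ lt_y y_off s1ty) ?on_cycle ?inE ?eqxx ?orbT.
- by rewrite (midpoint_unique free_arc_d _ lt_y y_off s1ty) ?on_cycle ?inE ?eqxx ?orbT.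
Qed.

Lemma mids_fixed m : m \in mids -> s1 m = m /\ t m = m.
Proof.
rewrite !inE => /or4P[] /eqP->; apply: midpoint_fixed;
  [exact: free_arc_a|exact: free_arc_b|exact: free_arc_c|exact: free_arc_d].
Qed.

Lemma val_mids : [/\ val mid_a = N - 1, val b < val mid_b < val c,
  val c < val mid_c < val d & val d < val mid_d < val a].
Proof.
split.
- by rewrite /mid_a /midpoint [in (2 * h)./2]mul2n doubleK; case_cshift a h; lia_pts.
- have := even_halfK (free_arc_even free_arc_b).
  by rewrite /mid_b /midpoint; case_cshift b (k1 - h)./2; lia_pts.
- have := even_halfK (free_arc_even free_arc_c).
  by rewrite /mid_c /midpoint; case_cshift c (k2 - k1)./2; lia_pts.
- have := even_halfK (free_arc_even free_arc_d).
  by rewrite /mid_d /midpoint; case_cshift d (N - h - k2)./2; lia_pts.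
Qed.

Ltac lia_mids := case: val_mids; case: val_cycle_pts; lia.

Lemma card_mids : #|mids| = 4.
Proof.
have neq (x y : pt n) : val x <> val y -> (x == y) = false by move/neq_of_val/negbTE.
by rewrite !cardsU1 cards1 !inE !neq //; lia_mids.
Qed.

Local Notation symmetric := [&& ~~ odd n, k1 == n - h & k2 == n + h].

Lemma opposite_symmetric : cshift a n = c -> cshift b n = d -> symmetric.
Proof.
move=> /(congr1 val) ac /(congr1 val) bd; have := even_halfK (free_arc_even free_arc_b).
move: ac bd; case_cshift a n; case_cshift b n.
all: move=> /= bd_bound bd ac_bound ac half_b.
all: have k1E : k1 = n - h by case: val_cycle_pts => /=; lia.
all: have k2E : k2 = n + h by case: val_cycle_pts => /=; lia.
all: rewrite k1E k2E !eqxx !andbT.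
all: have -> : n = (h + (n - h - h)./2).*2 by rewrite k1E in half_b; lia.
all: by rewrite odd_double.
Qed.

Lemma commuting_symmetric (g : perm2n n) :
  (forall x, g (sinf x) = sinf (g x)) -> (forall x, g (s1 x) = s1 (g x)) ->
  (forall x, g (t x) = t (g x)) -> (exists y, g y != y) ->
  (forall x, g x = cshift x n) /\ symmetric.
Proof.
move=> g_sinf g_s1 g_t [y gy].
have g_cshift := commute_cshift_cdist sinf_back g_sinf y.
set k := cdist y (g y) in g_cshift.
have k_bounds : 0 < k < N.
  rewrite cdist_lt andbT lt0n; apply: contraNneq gy => k0.
  by rewrite g_cshift k0 cshift0.
have g_fpf x : g x != x by rewrite g_cshift cshift_neq.
have g_s1t x : g (s1t x) = s1t (g x) by rewrite /s1t g_t g_s1.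
have half_turn u v : g u = v -> g v = u -> forall x, g x = cshift x n.
  move=> guv gvu x; rewrite g_cshift; congr cshift.
  have := @cshift_twice _ u k k_bounds.
  by rewrite -!g_cshift guv gvu => /(_ erefl); lia.
case: transp_cases => -[tu tv t_fix_uv _].
- have ga : g a = c by apply: (@commute_transp_swap _ g t) => //; pts_neq.
  have gc : g c = a.
    by apply: (@commute_transp_swap _ g t) => //; [pts_neq|move=> z zc za; apply: t_fix_uv].
  have g_half := half_turn a c ga gc; split=> //.
  by apply: opposite_symmetric; rewrite -!g_half // -s1t_a g_s1t ga s1t_c.
- have gb : g b = d by apply: (@commute_transp_swap _ g t) => //; pts_neq.
  have gd : g d = b.
    by apply: (@commute_transp_swap _ g t) => //; [pts_neq|move=> z zd zb; apply: t_fix_uv].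
  have g_half := half_turn b d gb gd; split=> //.
  by apply: opposite_symmetric; rewrite -!g_half // -s1t_d g_s1t gd s1t_b.
Qed.

Lemma sinf_cshift y i : sinf (cshift y i) = cshift (sinf y) i.
Proof. by rewrite !sinf_back !cshiftD addnC. Qed.

(* The rotation carrying m to mid_a, the point labelled 2n. *)
Definition recentring (m : pt n) : perm2n n := cshift_perm (cdist m mid_a).
Definition recentre m := conj4 (s0, sinf, s1, t) (recentring m).

Lemma recentring_mid m : recentring m m = mid_a.
Proof. by rewrite cshift_permE cshift_cdist. Qed.

Lemma recentring_sinf m x : recentring m (sinf x) = sinf (recentring m x).
Proof. exact: cshift_perm_commute sinf_back. Qed.

Lemma lab_mid_a : lab mid_a = N.
Proof. by rewrite /lab; lia_mids. Qed.

Lemma special_recentre m : s1 m = m -> t m = m -> special (recentre m).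
Proof.
move=> s1m tm; set g := recentring m.
have g_sinf : (sinf ^ g)%g = sinf by apply/conjg_perm_id => x; apply: recentring_sinf.
case/and3P: special_S => /and5P[P0 F P1 Pt /eqP Pr] std _.
rewrite /special /recentre /= g_sinf F std; apply/and3P; split=> //.
  apply/and5P; split=> //; try exact: prod_disj_transp_conj.
  by rewrite -g_sinf -!conjMg Pr conj1g.
apply/forallP => x; apply/implyP => /eqP top_x.
have -> : x = g m.
  case: val_mids => val_mid_a _ _ _; apply: val_inj; move: top_x.
  by rewrite /lab /g recentring_mid val_mid_a /=; lia.
by rewrite !permJ s1m tm !eqxx.
Qed.

Lemma special_in_class_eq : special_in_class (s0, sinf, s1, t) = recentre @: mids.
Proof.
apply/setP => S'; rewrite inE; apply/andP/imsetP => [[special_S' /conjugateP[g S'E]]|].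
  move: special_S'; rewrite S'E /special /= => /and3P[_ /is_sinf_std_shifts_back g_back top_fixed].
  have /conjg_perm_id g_sinf : (sinf ^ g)%g = sinf.
    by apply/permP => x; rewrite g_back sinf_back.
  set m := (g^-1)%g mid_a; have gm : g m = mid_a by rewrite permKV.
  move/forallP/(_ mid_a): top_fixed; rewrite lab_mid_a eqxx -gm !permJ !(inj_eq perm_inj).
  case/andP => /eqP s1m /eqP tm.
  exists m; first exact: fixed_in_mids.
  suff -> : g = recentring m by [].
  apply: (commute_shifts_back_eq (x := m) sinf_back g_sinf (recentring_sinf m)).
  by rewrite gm recentring_mid.
case=> m /mids_fixed[s1m tm] ->; split; first exact: special_recentre.
by apply/conjugateP; exists (recentring m).
Qed.

Lemma recentre_eq_symmetric m m' : recentre m = recentre m' -> m != m' ->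
  (forall x, (recentring m' * (recentring m)^-1)%g x = cshift x n) /\ symmetric.
Proof.
case=> eq0 eq_inf eq1 eqt neq_mm'; set g := (recentring m' * _)%g.
have commute s : (s ^ recentring m)%g = (s ^ recentring m')%g ->
    forall x, g (s x) = s (g x).
  by move=> eq_s; apply/conjg_perm_id; rewrite conjgM -eq_s conjgK.
apply: commuting_symmetric; [exact: commute|exact: commute|exact: commute|].
by exists m'; rewrite permM recentring_mid -(recentring_mid m) permK.
Qed.

Section Symmetric.
Hypotheses (k1E : k1 = n - h) (k2E : k2 = n + h).

Lemma cycle_pts_opposite :
  [/\ cshift a n = c, cshift b n = d, cshift c n = a & cshift d n = b].
Proof.
split; apply: val_inj;
  [case_cshift a n|case_cshift b n|case_cshift c n|case_cshift d n]; lia_pts.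
Qed.

Lemma s1t_cshift_opposite_arcs x x' L i : free_arc x L -> free_arc x' L ->
  cshift x n = x' -> i < L -> s1t (cshift (cshift x i) n) = cshift (s1t (cshift x i)) n.
Proof.
move=> arc_x arc_x' xx' lt_iL.
by rewrite cshiftD addnC -cshiftD xx' (free_arc_reflect arc_x' lt_iL)
  (free_arc_reflect arc_x lt_iL) cshiftD addnC -cshiftD xx'.
Qed.

Lemma s1t_cshift_half y : s1t (cshift y n) = cshift (s1t y) n.
Proof.
case: cycle_pts_opposite => ac bd ca db.
have len_ac : k2 - k1 = 2 * h by lia.
have len_bd : N - h - k2 = k1 - h by lia.
have arc_c := free_arc_c; have arc_d := free_arc_d.
rewrite len_ac in arc_c; rewrite len_bd in arc_d.
case: (free_arcs_cover y) => lt_y.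
- by rewrite -(cshift_cdist a y); apply: (s1t_cshift_opposite_arcs free_arc_a arc_c).
- by rewrite -(cshift_cdist b y); apply: (s1t_cshift_opposite_arcs free_arc_b arc_d).
- rewrite len_ac in lt_y; rewrite -(cshift_cdist c y).
  exact: (s1t_cshift_opposite_arcs arc_c free_arc_a).
- rewrite len_bd in lt_y; rewrite -(cshift_cdist d y).
  exact: (s1t_cshift_opposite_arcs arc_d free_arc_b).
Qed.

Lemma t_cshift_half y : t (cshift y n) = cshift (t y) n.
Proof.
case: cycle_pts_opposite => ac bd ca db; rewrite -!cshift_permE.
by case: transp_cases => -[tu tv t_fix_uv _];
  apply: (transp_commute tu tv t_fix_uv); rewrite cshift_permE.
Qed.

Lemma s1_cshift_half y : s1 (cshift y n) = cshift (s1 y) n.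
Proof.
have s1E x : s1 x = t (s1t x) by rewrite /s1t tK.
by rewrite !s1E s1t_cshift_half t_cshift_half.
Qed.

Lemma s0_cshift_half y : s0 (cshift y n) = cshift (s0 y) n.
Proof. by rewrite -!s1t_sinf sinf_cshift s1t_cshift_half. Qed.

Lemma recentre_cshift_half m : recentre (cshift m n) = recentre m.
Proof.
set r : perm2n n := cshift_perm n.
have r_commute (s : perm2n n) : (forall y, s (cshift y n) = cshift (s y) n) -> (s ^ r)%g = s.
  by move=> s_half; apply/conjg_perm_id => x; rewrite !cshift_permE.
rewrite /recentre /=.
have -> : recentring (cshift m n) = (r * recentring m)%g.
  apply: (commute_shifts_back_eq (x := cshift m n) sinf_back (recentring_sinf _)).
    by move=> x; rewrite !permM (cshift_perm_commute _ _ sinf_back) recentring_sinf.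
  rewrite recentring_mid permM !cshift_permE !cshiftD addnA addnn -mul2n addnC.
  by rewrite cshiftDm cshift_cdist.
by rewrite !conjgM !r_commute // => y;
  rewrite ?s0_cshift_half ?sinf_cshift ?s1_cshift_half ?t_cshift_half.
Qed.

Lemma card_recentre_mids_symmetric : #|recentre @: mids| = 2.
Proof.
case: cycle_pts_opposite => ac bd _ _.
have mid_ca : mid_c = cshift mid_a n.
  by rewrite /mid_c /mid_a /midpoint -ac (_ : k2 - k1 = 2 * h) ?cshiftD 1?addnC //; lia.
have mid_db : mid_d = cshift mid_b n.
  by rewrite /mid_d /mid_b /midpoint -bd (_ : N - h - k2 = k1 - h) ?cshiftD 1?addnC //; lia.
have neq_ab : recentre mid_a != recentre mid_b.
  apply/negP => /eqP eq_ab.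
  have neq_mid : mid_a != mid_b by apply: neq_of_val; lia_mids.
  case: (recentre_eq_symmetric eq_ab neq_mid) => /(_ mid_b) + _.
  rewrite permM recentring_mid -{2}(recentring_mid mid_a) permK -mid_db.
  have neq_ad : mid_a != mid_d by apply: neq_of_val; lia_mids.
  by move=> ad; rewrite ad eqxx in neq_ad.
rewrite /mids !imsetU1 imset_set1 mid_ca mid_db !recentre_cshift_half.
rewrite (_ : _ |: _ = [set recentre mid_a; recentre mid_b]) ?cards2 ?neq_ab //.
by apply/setP => T; rewrite !inE; do 2 case: eqP.
Qed.

End Symmetric.

Lemma card_special_in_class :
  #|special_in_class (s0, sinf, s1, t)| = if symmetric then 2 else 4.
Proof.
rewrite special_in_class_eq; case: ifP => [/and3P[_ /eqP k1E /eqP k2E]|asym].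
  exact: card_recentre_mids_symmetric.
rewrite card_in_imset ?card_mids // => m m' _ _ eq_mm'; apply/eqP/negPn/negP => neq_mm'.
by case: (recentre_eq_symmetric eq_mm' neq_mm') => _; rewrite asym.
Qed.

End SpecialTuple.

Theorem proposition8 (n : nat) (S : tuple4 n) (h k1 k2 : nat) :
  special S ->
  (h < k1 < k2)%N -> (k2 < 2 * n - h)%N ->
  (exists a b c d : pt n,
      [/\ lab a = (2 * n - h)%N, lab b = h, lab c = k1, lab d = k2 &
        let: (s0, sinf, s1, t) := S in
        let p := (s1 * t)%g in
        [/\ p a = b, p b = c, p c = d & p d = a]]) ->
  #|special_in_class S| =
    (if [&& ~~ odd n, k1 == n - h & k2 == n + h] then 2 else 4)%N.
Proof.
move=> special_S hk hk2 [a [b [c [d [lab_a lab_b lab_c lab_d]]]]].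
case: S special_S => [[[s0 sinf] s1] t] special_S /=; rewrite !permM => -[s1t_a s1t_b s1t_c s1t_d].
exact: (card_special_in_class special_S hk hk2 lab_a lab_b lab_c lab_d s1t_a s1t_b s1t_c s1t_d).
Qed.
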